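(* The two-dimensional subalgebras of ${\rm A}_3$ are exactly $\langle e_1,e_3\rangle$, $\langle e_1-e_2,e_3\rangle$, $\langle e_1,e_2\rangle$ and $\langle e_2,e_3\rangle$; up to automorphisms of ${\rm A}_3$ every two-dimensional subalgebra is equivalent to one of these four.
   Context: ${\rm A}_3$ is the complex algebra with basis $e_1,e_2,e_3$, unit $e_1$ ($e_1e_i=e_ie_1=e_i$), and $e_2e_2=e_2$; all other products of basis elements are zero. A subalgebra is a linear subspace closed under multiplication (it need not contain $e_1$). Equivalence up to automorphisms means one is mapped onto the other by an algebra automorphism. $\langle S\rangle$ denotes linear span. *)

From HB Require Import structures.
From mathcomp Require Import all_boot all_order all_algebra all_field.
Set Implicit Arguments. Unset Strict Implicit. Unset Printing Implicit Defensive.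
Import GRing.Theory.
Local Open Scope ring_scope.

(* The algebra A_3 over the complex numbers (algC), realised on coordinate
   row vectors 'rV[algC]_3 w.r.t. the basis e1, e2, e3. *)
Notation A3 := 'rV[algC]_3.

Definition i0 : 'I_3 := @Ordinal 3 0 isT.
Definition i1 : 'I_3 := @Ordinal 3 1 isT.
Definition i2 : 'I_3 := @Ordinal 3 2 isT.

Definition basisA3 (k : 'I_3) : A3 := \row_(j < 3) (if j == k then 1 else 0).
Definition e1 : A3 := basisA3 i0.
Definition e2 : A3 := basisA3 i1.
Definition e3 : A3 := basisA3 i2.

(* Bilinear product determined by: e1 unit, e2 e2 = e2, all other products
   of basis elements zero. For x = x1 e1 + x2 e2 + x3 e3 etc.:
   xy = x1y1 e1 + (x1y2 + x2y1 + x2y2) e2 + (x1y3 + x3y1) e3. *)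
Definition mulA3 (x y : A3) : A3 :=
  \row_(j < 3)
    (if j == i0 then x 0 i0 * y 0 i0
     else if j == i1 then x 0 i0 * y 0 i1 + x 0 i1 * y 0 i0 + x 0 i1 * y 0 i1
     else x 0 i0 * y 0 i2 + x 0 i2 * y 0 i0).

Definition is_subalgebra (S : {vspace A3}) : Prop :=
  forall x y, x \in S -> y \in S -> mulA3 x y \in S.

Definition is_automorphism (phi : A3 -> A3) : Prop :=
  [/\ forall (a : algC) (x y : A3), phi (a *: x + y) = a *: phi x + phi y,
      forall x y, phi (mulA3 x y) = mulA3 (phi x) (phi y)
    & bijective phi].

Definition maps_onto (phi : A3 -> A3) (S T : {vspace A3}) : Prop :=
  forall y, y \in T <-> exists2 x, x \in S & phi x = y.

Definition equiv_aut (S T : {vspace A3}) : Prop :=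
  exists phi, is_automorphism phi /\ maps_onto phi S T.

Definition listed2 : seq {vspace A3} :=
  [:: <<[:: e1; e3]>>%VS; <<[:: e1 - e2; e3]>>%VS;
      <<[:: e1; e2]>>%VS; <<[:: e2; e3]>>%VS].

From HB Require Import structures.
From mathcomp Require Import all_boot all_order all_algebra all_field.
From mathcomp Require Import ring.
Import GRing.Theory.
Local Open Scope ring_scope.

(* A two-dimensional subspace of A_3 is the kernel of a nonzero linear form
   x |-> p x1 + q x2 + r x3. If it is a subalgebra, squaring its elements
   r e1 - p e3 and r e2 - q e3 forces p = q = 0 when r <> 0, and squaring
   q e1 - p e2 forces p q (p - q) = 0 when r = 0. So the form is proportional
   to x2, x1 + x2, x3 or x1, whose kernels are the four listed subalgebras.
   As the list is exhaustive, the identity provides the equivalence. *)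

Section CodimensionOne.

Variables (K : fieldType) (vT : vectType K).
Implicit Types S : {vspace vT}.

Lemma lker_daddv_pi_compl S : lker (daddv_pi S^C S) = S.
Proof.
have dxS : (S^C :&: S = 0)%VS by rewrite capvC capv_compl.
have decomp x : daddv_pi S^C S x + daddv_pi S S^C x = x.
  by rewrite daddv_pi_add // addvC addv_complf memvf.
apply/vspaceP => x; rewrite memv_ker; apply/eqP/idP => [px0 | Sx].
  by rewrite -[x]decomp px0 add0r memv_pi.
have := decomp x.
by rewrite (daddv_pi_id (capv_compl S) Sx) -{3}[x]add0r => /addIr.
Qed.

(* The form is the coordinate, along a generator of the line S^C, of the
   projection onto S^C along S. *)
Lemma codim1_scalar_ker S : (\dim S).+1 = \dim {:vT} ->
  exists phi : {scalar vT}, forall x, (x \in S) = (phi x == 0).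
Proof.
move=> dimS; set w := vpick S^C.
have dimSC : \dim S^C = 1%N by rewrite dimv_compl -dimS subSnn.
have w_neq0 : w != 0 by rewrite vpick0 -dimv_eq0 dimSC.
have SC_line : (S^C = <[w]>)%VS.
  by apply/eqP; rewrite eq_sym eqEdim -memvE memv_pick dim_vline w_neq0 dimSC.
exists (coord [tuple w] 0 \o daddv_pi S^C S) => x /=.
rewrite -{1}(lker_daddv_pi_compl S) memv_ker.
have /vlineP[k ->] : daddv_pi S^C S x \in <[w]>%VS by rewrite -SC_line memv_pi.
have /coord_free coord_w : free [tuple w] by rewrite seq1_free.
by rewrite linearZ /= (coord_w 0) eqxx mulr1 scaler_eq0 (negPf w_neq0) orbF.
Qed.

End CodimensionOne.

Definition dot3 (a x : A3) : algC :=
  a 0 i0 * x 0 i0 + a 0 i1 * x 0 i1 + a 0 i2 * x 0 i2.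

Ltac coords := rewrite /mulA3 /dot3 /e1 /e2 /e3 /basisA3 ?mxE /=.

Lemma ord3P (P : 'I_3 -> Prop) : P i0 -> P i1 -> P i2 -> forall j, P j.
Proof.
by move=> ? ? ? [[|[|[|//]]] lt_j3]; rewrite (bool_irrelevance lt_j3 isT).
Qed.

Lemma row3P (x y : A3) :
  x 0 i0 = y 0 i0 -> x 0 i1 = y 0 i1 -> x 0 i2 = y 0 i2 -> x = y.
Proof. by move=> h0 h1 h2; apply/rowP; apply: ord3P; rewrite ?ord1. Qed.

Lemma row3E (x : A3) : x = x 0 i0 *: e1 + x 0 i1 *: e2 + x 0 i2 *: e3.
Proof. by apply: row3P; coords; ring. Qed.

Fact dot3_is_linear a : linear (dot3 a : A3 -> algC^o).
Proof. by move=> k x y; rewrite /dot3 !mxE /GRing.scale /=; ring. Qed.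

HB.instance Definition _ a :=
  GRing.isLinear.Build algC _ _ _ (dot3 a : A3 -> algC^o) (dot3_is_linear a).

Definition dot3_lfun a : 'Hom(A3, algC^o) := linfun (dot3 a : A3 -> algC^o).

Lemma dot3_lfunE a x : dot3_lfun a x = dot3 a x.
Proof. exact: lfunE. Qed.

Definition hyperplane (a : A3) : {vspace A3} := lker (dot3_lfun a).

Lemma mem_hyperplane a x : (x \in hyperplane a) = (dot3 a x == 0).
Proof. by rewrite memv_ker dot3_lfunE. Qed.

Lemma hyperplaneZ k a : k != 0 -> hyperplane (k *: a) = hyperplane a.
Proof.
move=> k_neq0; apply/vspaceP => x; rewrite !mem_hyperplane.
have -> : dot3 (k *: a) x = k * dot3 a x by rewrite /dot3 !mxE; ring.
by rewrite mulf_eq0 (negPf k_neq0).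
Qed.

Lemma dot3_basis a j : dot3 a (basisA3 j) = a 0 j.
Proof. by move: j; apply: ord3P; coords; ring. Qed.

Lemma dim_hyperplane a : a != 0 -> \dim (hyperplane a) = 2%N.
Proof.
case/matrix0Pn => i [j aj_neq0]; rewrite [i]ord1 in aj_neq0.
have dim_img : \dim (limg (dot3_lfun a)) = 1%N.
  apply/eqP; rewrite eqn_leq -[X in (_ <= X)%N](dimvf algC^o) dimvS ?subvf //.
  rewrite lt0n dimv_eq0; apply: contraNneq aj_neq0 => img0.
  have := memv_img (dot3_lfun a) (memvf (basisA3 j)).
  by rewrite img0 memv0 dot3_lfunE dot3_basis.
have := limg_ker_dim (dot3_lfun a) fullv.
by rewrite capfv dim_img dimvf addn1 => -[].
Qed.

Lemma scalar_dot3 (phi : {scalar A3}) x :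
  phi x = dot3 (\row_j phi (basisA3 j)) x.
Proof. by rewrite {1}[x]row3E !linearD !linearZ /dot3 !mxE /=; ring. Qed.

Lemma dim2_hyperplane S : \dim S = 2%N -> exists2 a, a != 0 & S = hyperplane a.
Proof.
move=> dimS; have [|phi Sphi] := @codim1_scalar_ker _ _ S.
  by rewrite dimS dimvf.
set a := \row_j phi (basisA3 j).
have Sa : S = hyperplane a.
  by apply/vspaceP => x; rewrite Sphi mem_hyperplane scalar_dot3.
exists a => //; apply: contra_eqN dimS => /eqP a0.
suff -> : S = fullv by rewrite dimvf.
apply/vspaceP => x; rewrite Sa mem_hyperplane memvf a0.
by rewrite /dot3 !mxE; apply/eqP; ring.
Qed.

Lemma basisA3_neq0 j : basisA3 j != 0.
Proof. by apply/matrix0Pn; exists 0, j; rewrite mxE eqxx oner_neq0. Qed.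

Definition listed_forms : seq A3 := [:: e2; e1 + e2; e3; e1].

Lemma listed_forms_neq0 b : b \in listed_forms -> b != 0.
Proof.
rewrite !inE => /or4P[] /eqP->; try exact: basisA3_neq0.
by apply/matrix0Pn; exists 0, i0; coords; rewrite addr0 oner_neq0.
Qed.

Lemma listed2_hyperplanes : listed2 = map hyperplane listed_forms.
Proof.
have span2E (w u v b : A3) : b \in listed_forms ->
    (forall x, exists k l, x = k *: u + l *: v + dot3 b x *: w) ->
  <<[:: u; v]>>%VS = hyperplane b.
  move=> /listed_forms_neq0 b_neq0 decomp.
  apply/eqP; rewrite eq_sym eqEdim dim_hyperplane //.
  rewrite (leq_trans (dim_span _)) // andbT; apply/subvP => x.
  rewrite mem_hyperplane => /eqP bx0; have [k [l ->]] := decomp x.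
  by rewrite bx0 scale0r addr0 span_cons span_seq1 memv_add ?memvZ ?memv_line.
congr [:: _; _; _; _].
- apply: (span2E e2); first by rewrite inE eqxx.
  by move=> x; exists (x 0 i0), (x 0 i2); apply: row3P; coords; ring.
- apply: (span2E e2); first by rewrite !inE eqxx orbT.
  by move=> x; exists (x 0 i0), (x 0 i2); apply: row3P; coords; ring.
- apply: (span2E e3); first by rewrite !inE eqxx !orbT.
  by move=> x; exists (x 0 i0), (x 0 i1); apply: row3P; coords; ring.
- apply: (span2E e1); first by rewrite !inE eqxx !orbT.
  by move=> x; exists (x 0 i1), (x 0 i2); apply: row3P; coords; ring.
Qed.

Lemma listed_hyperplane_subalgebra b :
  b \in listed_forms -> is_subalgebra (hyperplane b).
Proof.
move=> b_listed x y; rewrite !mem_hyperplane => /eqP hx /eqP hy; apply/eqP.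
move: b_listed hx hy; rewrite !inE => /or4P[] /eqP-> hx hy.
- have -> : dot3 e2 (mulA3 x y) =
      x 0 i0 * dot3 e2 y + y 0 i0 * dot3 e2 x + dot3 e2 x * dot3 e2 y.
    by coords; ring.
  by rewrite hx hy; ring.
- have -> : dot3 (e1 + e2) (mulA3 x y) = dot3 (e1 + e2) x * dot3 (e1 + e2) y.
    by coords; ring.
  by rewrite hx mul0r.
- have -> : dot3 e3 (mulA3 x y) = x 0 i0 * dot3 e3 y + y 0 i0 * dot3 e3 x.
    by coords; ring.
  by rewrite hx hy; ring.
- have -> : dot3 e1 (mulA3 x y) = dot3 e1 x * dot3 e1 y.
    by coords; ring.
  by rewrite hx mul0r.
Qed.

Lemma subalgebra_hyperplane_listed a :
  a != 0 -> is_subalgebra (hyperplane a) -> hyperplane a \in listed2.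
Proof.
move=> a_neq0 subA.
have sqr x : dot3 a x = 0 -> dot3 a (mulA3 x x) = 0.
  move/eqP; rewrite -mem_hyperplane => Ax.
  by apply/eqP; rewrite -mem_hyperplane subA.
have listedZ k b :
    k != 0 -> b \in listed_forms -> hyperplane (k *: b) \in listed2.
  by move=> k_neq0 b_listed; rewrite hyperplaneZ // listed2_hyperplanes map_f.
have cancel_sq (s t : algC) : t != 0 -> s * (t * t) = 0 -> s = 0.
  by move=> t_neq0 /eqP; rewrite !mulf_eq0 (negPf t_neq0) !orbF => /eqP.
move: a_neq0 sqr; rewrite [a]row3E.
move: (a 0 i0) (a 0 i1) (a 0 i2) => p q r a_neq0 sqr.
have [r0 | r_neq0] := eqVneq r 0.
  subst r; rewrite scale0r addr0 in a_neq0 sqr *.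
  have [q0 | q_neq0] := eqVneq q 0.
    subst q; rewrite scale0r addr0 in a_neq0 *.
    apply: listedZ; last by rewrite !inE eqxx !orbT.
    by apply: contraNneq a_neq0 => ->; rewrite scale0r.
  have /eqP : p * q * (p - q) = 0.
    by rewrite -(sqr (q *: e1 - p *: e2)); coords; ring.
  rewrite !mulf_eq0 (negPf q_neq0) orbF subr_eq0 => /orP[] /eqP->.
    by rewrite scale0r add0r; apply: listedZ; rewrite // !inE eqxx.
  by rewrite -scalerDr; apply: listedZ; rewrite // !inE eqxx orbT.
have p0 : p = 0.
  apply: (cancel_sq _ r) => //.
  apply/eqP; rewrite -oppr_eq0; apply/eqP.
  by rewrite -(sqr (r *: e1 - p *: e3)); coords; ring.
have q0 : q = 0.
  apply: (cancel_sq _ r) => //.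
  by rewrite -(sqr (r *: e2 - q *: e3)); coords; ring.
by rewrite p0 q0 !scale0r !add0r; apply: listedZ; rewrite // !inE eqxx !orbT.
Qed.

Lemma dim2_subalgebra_listed S :
  \dim S = 2%N -> is_subalgebra S -> S \in listed2.
Proof.
move=> /dim2_hyperplane[a a_neq0 ->]; exact: subalgebra_hyperplane_listed.
Qed.

Lemma equiv_aut_refl S : equiv_aut S S.
Proof.
exists id; split; first by split=> //; exists id.
by move=> y; split=> [Sy | [x Sx <-]]; first exists y.
Qed.

Theorem mainTheorem9 :
  (* each listed space is a two-dimensional subalgebra *)
  (forall T, T \in listed2 -> \dim T = 2%N /\ is_subalgebra T) /\
  (* every two-dimensional subalgebra is one of them *)
  (forall S : {vspace A3}, \dim S = 2%N -> is_subalgebra S -> S \in listed2) /\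
  (* up to automorphism, every two-dimensional subalgebra is equivalent to one of them *)
  (forall S : {vspace A3}, \dim S = 2%N -> is_subalgebra S ->
     exists2 T, T \in listed2 & equiv_aut S T).
Proof.
split; [|split].
- rewrite listed2_hyperplanes => T /mapP[b b_listed ->]; split.
    exact/dim_hyperplane/listed_forms_neq0.
  exact: listed_hyperplane_subalgebra.
- exact: dim2_subalgebra_listed.
- move=> S dimS subS; exists S; first exact: dim2_subalgebra_listed.
  exact: equiv_aut_refl.
Qed.
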